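(* If $\mathbf M\in\mathcal M_1$, then every component of $\liminf_{n\to\infty}\mathbf M^n\mathbf 1^T$ is finite, i.e. $\liminf_{n\to\infty}\sum_{j\in\mathbb N}M^{(n)}_{ij}<\infty$ for every $i\in\mathbb N$. If $\mathbf M\in\mathcal M_1^0$, then there is a constant $C\in(0,\infty)$ such that $$M_i^{(n)}:=\sum_{j\in\mathbb N}M^{(n)}_{ij}\le Cu_i\le CU<\infty\quad\text{for all } i,n\in\mathbb N.$$
   Context: A GWBP/$\infty$ has types $\mathbb N=\{1,2,\dots\}$; a type-$i$ particle produces a random vector $\mathbf Z_i=(Z_{ij})_{j\in\mathbb N}$ of children with $Z_i:=\sum_jZ_{ij}<\infty$ a.s.; $\mathbf Z_i(n)=(Z_{ij}(n))_j$ is the generation-$n$ population from one type-$i$ particle. Mean matrix $\mathbf M=(M_{ij})$, $M_{ij}=\mathbb EZ_{ij}$, $\mathbf M^n=(M^{(n)}_{ij})$ with $M^{(n)}_{ij}=\mathbb EZ_{ij}(n)$, $M_i=\sum_jM_{ij}=\mathbb EZ_i$. Irreducible: for all $i,j$ some $M^{(n)}_{ij}>0$; aperiodic: gcd of such $n$ is 1; then $\lim_n(M^{(n)}_{ij})^{1/n}=1/R$ for a common $R$. $\mathbf M\in\mathcal M_1$ means: (i) irreducible, aperiodic, $R=1$, 1-recurrent ($\sum_nM^{(n)}_{ij}=\infty$) and 1-positive ($\lim_nM^{(n)}_{ij}>0$ for all $i,j$); then there are positive eigenvectors $\mathbf v\mathbf M=\mathbf v$, $\mathbf M\mathbf u^T=\mathbf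 u^T$, unique up to positive multiples, normalized with $\sum_jv_ju_j=1$; (ii) $\sum_jv_j=1$ and $U:=\sup_iu_i<\infty$; (iii) $\lim_{N\to\infty}\sup_iM_i^{-1}\sum_{j>N}M_{ij}=0$ and $\lim_{K\to\infty}\sup_iM_i^{-1}\mathbb E[Z_i;Z_i>K]=0$. $\mathbf M\in\mathcal M_1^0$ means $\mathbf M\in\mathcal M_1$ and (iv) there exist $m\in\mathbb N$, $c,C>0$ with $M_{ij}<Cu_iv_j$ and $M^{(m)}_{1j}>cv_j$ for all $i,j$. *)

(* Types N = {1,2,...} are encoded 0-based:
   index i : nat stands for type i+1 (so type 1 is index 0). *)
From mathcomp Require Import all_boot all_order all_algebra.
From mathcomp Require Import all_classical all_reals all_analysis.
Set Implicit Arguments. Unset Strict Implicit. Unset Printing Implicit Defensive.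
Import Order.TTheory GRing.Theory Num.Theory.
Local Open Scope classical_set_scope.
Local Open Scope ring_scope.
Local Open Scope ereal_scope.

Section GWBP.
Variable R : realType.

Fixpoint mpow (M : nat -> nat -> R) (n : nat) : nat -> nat -> \bar R :=
  match n with
  | 0%N => fun i j => ((i == j)%:R)%:E
  | n'.+1 => fun i j => \sum_(0 <= k <oo) (mpow M n' i k * (M k j)%:E)
  end.

Definition Mtot (M : nat -> nat -> R) (i : nat) : \bar R :=
  \sum_(0 <= j <oo) (M i j)%:E.

Definition Mrow (M : nat -> nat -> R) (n i : nat) : \bar R :=
  \sum_(0 <= j <oo) mpow M n i j.

Definition eroot (n : nat) (x : \bar R) : \bar R :=
  if x is r%:E then (r `^ (n%:R)^-1)%:E else x.

Definition irreducible (M : nat -> nat -> R) : Prop :=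
  forall i j, exists n, 0 < mpow M n.+1 i j.

(* gcd {n >= 1 : M^(n)_ii > 0} = 1 for every i *)
Definition aperiodic (M : nat -> nat -> R) : Prop :=
  forall i (d : nat), (forall n, 0 < mpow M n.+1 i i -> (d %| n.+1)%N) -> d = 1%N.

(* lim_n (M^(n)_ij)^(1/n) = 1/R with R = 1 *)
Definition radius_one (M : nat -> nat -> R) : Prop :=
  forall i j, (fun n => eroot n.+1 (mpow M n.+1 i j)) @ \oo --> 1.

Definition one_recurrent (M : nat -> nat -> R) : Prop :=
  forall i j, \sum_(0 <= n <oo) mpow M n.+1 i j = +oo.

Definition one_positive (M : nat -> nat -> R) : Prop :=
  forall i j, exists l : \bar R, 0 < l /\ (fun n => mpow M n i j) @ \oo --> l.

(* Offspring model: on a probability space, Z i j = number of type-j children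
   of a type-i particle; Ztot i = Z_i = sum_j Z_ij. *)
Definition Ztot d (T : measurableType d) (Z : nat -> nat -> T -> nat) (i : nat) (x : T)
  : \bar R := \sum_(0 <= j <oo) ((Z i j x)%:R)%:E.

Definition trunc_mean d (T : measurableType d) (P : probability T R)
  (Z : nat -> nat -> T -> nat) (i K : nat) : \bar R :=
  \int[P]_(x in [set x | (K%:R)%:E < Ztot Z i x]) Ztot Z i x.

Definition Usup (u : nat -> R) : \bar R := ereal_sup (range (fun i => (u i)%:E)).

(* M in M_1, with v, u the normalized left/right eigenvectors, and
   the offspring random vectors Z realizing the means M. *)
Definition inM1 (M : nat -> nat -> R) (u v : nat -> R)
  d (T : measurableType d) (P : probability T R) (Z : nat -> nat -> T -> nat) : Prop :=
  [/\
      [/\ (forall i j, measurable_fun setT (fun x => ((Z i j x)%:R : R))),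
      (forall i, {ae P, forall x, Ztot Z i x < +oo}) &
      (forall i j, \int[P]_x ((Z i j x)%:R)%:E = (M i j)%:E)],
      [/\ irreducible M, aperiodic M, radius_one M, one_recurrent M & one_positive M],
      [/\ (forall j, 0 < v j)%R, (forall i, 0 < u i)%R,
          (forall j, \sum_(0 <= i <oo) (v i * M i j)%:E = (v j)%:E),
          (forall i, \sum_(0 <= j <oo) (M i j * u j)%:E = (u i)%:E) &
          \sum_(0 <= j <oo) (v j * u j)%:E = 1],
      \sum_(0 <= j <oo) (v j)%:E = 1 /\ Usup u < +oo &
      (fun N => ereal_sup (range (fun i =>
          ((fine (Mtot M i))^-1)%:E * \sum_(N.+1 <= j <oo) (M i j)%:E))) @ \oo --> 0
      /\
      (fun K => ereal_sup (range (fun i =>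
          ((fine (Mtot M i))^-1)%:E * trunc_mean P Z i K))) @ \oo --> 0].

(* extra condition (iv) of M_1^0 *)
Definition cond_iv (M : nat -> nat -> R) (u v : nat -> R) : Prop :=
  exists (m : nat) (c C : R), [/\ (0 < m)%N, (0 < c)%R, (0 < C)%R,
    (forall i j, M i j < C * u i * v j)%R &
    (forall j, (c * v j)%:E < mpow M m 0 j)].

End GWBP.

(* Both eigenvectors survive all powers of M: v M^n = v and M^n u = u.
   Pairing the first identity with the constant vector 1 and using that v is a
   probability vector gives sum_i v_i M_i^(n) = 1, hence M_i^(n) <= 1/v_i.
   Under the rank-one bound M_kj <= C u_k v_j,
   M_ij^(n+1) = sum_k M_ik^(n) M_kj <= C v_j (M^n u)_i = C u_i v_j,
   and summing over j gives M_i^(n+1) <= C u_i <= C U. *)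
From mathcomp Require Import all_boot all_order all_algebra.
From mathcomp Require Import all_classical all_reals all_analysis.
Import Order.TTheory GRing.Theory Num.Theory.
Local Open Scope classical_set_scope.
Local Open Scope ring_scope.
Local Open Scope ereal_scope.

Section nneseries_extra.
Variable R : realType.
Implicit Types f : nat -> \bar R.

Lemma nneseries_ge_term f l : (forall k, 0 <= f k) ->
  f l <= \sum_(0 <= k <oo) f k.
Proof.
move=> f0; rewrite (@nneseriesD1 _ f l xpredT) //.
by apply: leeDl; apply: nneseries_ge0 => k _ _; exact: f0.
Qed.

Lemma nneseries_delta f i : (forall k, 0 <= f k) ->
  \sum_(0 <= k <oo) (((i == k)%:R)%:E * f k) = f i.
Proof.
move=> f0; rewrite (@nneseriesD1 _ _ i xpredT) //; last first.
  by move=> k _; apply: mule_ge0 => //; rewrite lee_fin ler0n.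
rewrite eqxx mul1e eseries0 ?adde0 // => k _ /= /negPf.
by rewrite eq_sym => ->; rewrite mul0e.
Qed.

Lemma fin_num_nneseries_weighted f (w : nat -> R) l :
  (forall k, 0 <= f k) -> (forall k, 0 < w k)%R ->
  \sum_(0 <= k <oo) (f k * (w k)%:E) \is a fin_num -> f l \is a fin_num.
Proof.
move=> f0 w0; have fw0 k : 0 <= f k * (w k)%:E.
  by apply: mule_ge0 => //; rewrite lee_fin ltW.
rewrite ge0_fin_numE ?nneseries_ge0 // => /(le_lt_trans (nneseries_ge_term _ l fw0)).
have := f0 l; case: (f l) => [r| |] //= _.
by rewrite gt0_mulye ?lte_fin.
Qed.

Lemma limn_einf_le (s : nat -> \bar R) (l : \bar R) :
  (forall n, s n <= l) -> limn_einf s <= l.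
Proof.
move=> sl; rewrite limn_einf_lim; apply: lime_le; first exact: is_cvg_einfs.
apply: nearW => n; apply: le_trans (sl n).
by apply: ereal_inf_lbound; exists n => /=.
Qed.

End nneseries_extra.

Section mean_matrix_powers.
Variable R : realType.
Variable M : nat -> nat -> R.
Hypothesis M_ge0 : forall i j, (0 <= M i j)%R.

Lemma mpow_ge0 n i j : 0 <= mpow M n i j.
Proof.
elim: n i j => [|n IH] i j /=; first by rewrite lee_fin ler0n.
by apply: nneseries_ge0 => k _ _; apply: mule_ge0 => //; rewrite lee_fin.
Qed.

Lemma Mrow_ge0 n i : 0 <= Mrow M n i.
Proof. by apply: nneseries_ge0 => j _ _; exact: mpow_ge0. Qed.

Section right_eigenvector.
Variable u : nat -> R.
Hypothesis u_gt0 : forall i, (0 < u i)%R.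
Hypothesis Mu : forall i, \sum_(0 <= j <oo) (M i j * u j)%:E = (u i)%:E.

Lemma mpow_right_eigen n i :
  \sum_(0 <= k <oo) (mpow M n i k * (u k)%:E) = (u i)%:E.
Proof.
have u_ge0 k : 0 <= (u k)%:E by rewrite lee_fin ltW.
elim: n i => [|n IH] i; first exact: nneseries_delta.
have mpow_fin l : mpow M n i l \is a fin_num.
  by apply: (@fin_num_nneseries_weighted _ _ u l (mpow_ge0 n i) u_gt0); rewrite IH.
transitivity (\sum_(0 <= k <oo) \sum_(0 <= l <oo)
                (mpow M n i l * (M l k * u k)%:E)).
  apply: eq_eseriesr => k _ /=; rewrite muleC -nneseriesZl; last first.
    by move=> l _; apply: mule_ge0; [exact: mpow_ge0|rewrite lee_fin].
  by apply: eq_eseriesr => l _; rewrite EFinM muleCA (muleC (u k)%:E).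
rewrite nneseries_interchange; last first.
  by move=> l k; apply: mule_ge0; [exact: mpow_ge0|rewrite lee_fin mulr_ge0 // ltW].
rewrite -(IH i); apply: eq_eseriesr => l _.
rewrite -(fineK (mpow_fin l)) nneseriesZl ?Mu // => k _.
by rewrite lee_fin mulr_ge0 // ltW.
Qed.

End right_eigenvector.

Section left_eigenvector.
Variable v : nat -> R.
Hypothesis v_gt0 : forall j, (0 < v j)%R.
Hypothesis vM : forall j, \sum_(0 <= i <oo) (v i * M i j)%:E = (v j)%:E.

Lemma mpow_left_eigen n j :
  \sum_(0 <= i <oo) ((v i)%:E * mpow M n i j) = (v j)%:E.
Proof.
have v_ge0 i : 0 <= (v i)%:E by rewrite lee_fin ltW.
elim: n j => [|n IH] j.
  rewrite -[RHS](@nneseries_delta _ (fun i => (v i)%:E) j) //.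
  by apply: eq_eseriesr => k _ /=; rewrite muleC eq_sym.
transitivity (\sum_(0 <= k <oo) \sum_(0 <= i <oo)
                ((v i)%:E * mpow M n i k * (M k j)%:E)).
  rewrite -nneseries_interchange; last first.
    move=> i k; apply: mule_ge0; last by rewrite lee_fin.
    by apply: mule_ge0 => //; exact: mpow_ge0.
  apply: eq_eseriesr => i _ /=; rewrite -nneseriesZl; last first.
    by move=> l _; apply: mule_ge0; [exact: mpow_ge0|rewrite lee_fin].
  by apply: eq_eseriesr => l _; rewrite muleA.
rewrite -[RHS]vM; apply: eq_eseriesr => k _.
rewrite EFinM -IH muleC -nneseriesZl; last first.
  by move=> i _; apply: mule_ge0 => //; exact: mpow_ge0.
by apply: eq_eseriesr => i _; rewrite muleC.
Qed.

Hypothesis v_sum1 : \sum_(0 <= j <oo) (v j)%:E = 1.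

Lemma nneseries_v_Mrow n : \sum_(0 <= i <oo) ((v i)%:E * Mrow M n i) = 1.
Proof.
rewrite -v_sum1 -[RHS](eq_eseriesr (fun j _ => mpow_left_eigen n j)).
rewrite -nneseries_interchange; last first.
  by move=> i k; apply: mule_ge0; [rewrite lee_fin ltW|exact: mpow_ge0].
apply: eq_eseriesr => i _; rewrite /Mrow nneseriesZl // => k _.
exact: mpow_ge0.
Qed.

Lemma Mrow_le_inv n i : Mrow M n i <= ((v i)^-1)%:E.
Proof.
rewrite -[_%:E]mule1 lee_pdivlMl // -(nneseries_v_Mrow n).
apply: nneseries_ge_term => k.
by apply: mule_ge0; [rewrite lee_fin ltW|exact: Mrow_ge0].
Qed.

End left_eigenvector.

Lemma Mrow_le_rank_one (u v : nat -> R) (C : R) n i :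
  (forall i, (0 < u i)%R) -> (forall j, (0 < v j)%R) ->
  (forall i, \sum_(0 <= j <oo) (M i j * u j)%:E = (u i)%:E) ->
  \sum_(0 <= j <oo) (v j)%:E = 1 ->
  (forall i j, (M i j <= C * u i * v j)%R) ->
  Mrow M n.+1 i <= (C * u i)%:E.
Proof.
move=> u_gt0 v_gt0 Mu v_sum1 MC.
have mpowu_ge0 k : 0 <= mpow M n i k * (u k)%:E.
  by apply: mule_ge0; [exact: mpow_ge0|rewrite lee_fin ltW].
have entry_le j : mpow M n.+1 i j <= (C * u i)%:E * (v j)%:E.
  apply: (@le_trans _ _ (\sum_(0 <= k <oo)
                           ((C * v j)%:E * (mpow M n i k * (u k)%:E)))).
    apply: lee_nneseries => [k _ _|k _].
      by apply: mule_ge0; [exact: mpow_ge0|rewrite lee_fin].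
    rewrite muleCA -EFinM; apply: lee_wpmul2l; first exact: mpow_ge0.
    by rewrite lee_fin mulrAC.
  by rewrite nneseriesZl // mpow_right_eigen // -!EFinM mulrAC.
rewrite -[X in _ <= X]mule1 -v_sum1 -nneseriesZl; last first.
  by move=> j _; rewrite lee_fin ltW.
by apply: lee_nneseries => [j _ _|j _ //]; exact: mpow_ge0.
Qed.

End mean_matrix_powers.

Theorem lemma1 (R : realType) (M : nat -> nat -> R) (u v : nat -> R)
  (d : measure_display) (T : measurableType d) (P : probability T R)
  (Z : nat -> nat -> T -> nat) :
  inM1 M u v P Z ->
  (forall i, limn_einf (fun n => Mrow M n i) < +oo) /\
  (cond_iv M u v ->
   exists C : R, (0 < C)%R /\
     forall i n, Mrow M n.+1 i <= (C * u i)%:E /\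
                 (C * u i)%:E <= C%:E * Usup u /\ C%:E * Usup u < +oo).
Proof.
case=> [[_ _ EZ]] _ [v_gt0 u_gt0 vM Mu _] [v_sum1 U_lty] _.
have M_ge0 i j : (0 <= M i j)%R.
  by rewrite -lee_fin -EZ; apply: integral_ge0 => x _; rewrite lee_fin.
have u_le_U i : (u i)%:E <= Usup u by apply: ereal_sup_ubound; exists i.
split=> [i|].
  apply: le_lt_trans (ltry ((v i)^-1)); apply: limn_einf_le => n.
  exact: Mrow_le_inv.
case=> _ [_ [C [_ _ C_gt0 MC _]]]; exists C; split => // i n.
have U_fin : Usup u \is a fin_num.
  by rewrite ge0_fin_numE // (le_trans _ (u_le_U 0%N)) // lee_fin ltW.
split; first by apply: Mrow_le_rank_one => // k j; exact: ltW.
split; first by rewrite EFinM lee_wpmul2l // lee_fin ltW.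
by rewrite -(fineK U_fin) -EFinM ltry.
Qed.
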